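(* Let $m<n$ be natural numbers and let $(A;R)\in\mathcal C$. Suppose there is $C\subseteq A$ with $C\le A$, $|C|=n$, $d(C)=n-1$, and every $(n-1)$-element subset of $C$ independent in $PG(A;R)$. Then for every $(B;R')\in\mathcal C_m$, the pregeometry $PG(A;R)$ is not isomorphic to $PG(B;R')$.
   Context: A set system is a pair $(A;R)$ where $R$ is a set of finite non-empty subsets of $A$; for $X\subseteq A$, $R[X]=\{r\in R:r\subseteq X\}$ and $\delta(X)=|X|-|R[X]|$. $\mathcal C$ is the class of finite set systems with $\delta(X)\ge0$ for all $X\subseteq A$, and $\mathcal C_m$ is the class of members of $\mathcal C$ all of whose sets in $R$ have size at most $m$. $X\le A$ means $\delta(X)\le\delta(X')$ for all $X\subseteq X'\subseteq A$. $d(X)=\min\{\delta(Y):X\subseteq Y\subseteq A\}$, $\mathrm{cl}(X)=\{y:d(X\cup\{y\})=d(X)\}$, and $PG(A;R)$ is the pregeometry $(A,\mathrm{cl})$ with rank function $d$. *)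

From HB Require Import structures.
From mathcomp Require Import all_boot all_order all_algebra.
Set Implicit Arguments. Unset Strict Implicit. Unset Printing Implicit Defensive.
Import Order.TTheory GRing.Theory Num.Theory.

Section SetSystems.
Variable A : finType.
Variable R : {set {set A}}.

Definition Rin (X : {set A}) : {set {set A}} := [set r in R | r \subset X].

Definition delta (X : {set A}) : int := (#|X|%:Z - #|Rin X|%:Z)%R.

Definition inC : Prop := set0 \notin R /\ forall X : {set A}, (0 <= delta X)%R.

Definition inCm (m : nat) : Prop := inC /\ forall r, r \in R -> #|r| <= m.

Definition selfsuff (X : {set A}) : Prop :=
  forall X' : {set A}, X \subset X' -> (delta X <= delta X')%R.

Definition rkd (X : {set A}) : int :=
  \big[Order.min/delta setT]_(Y : {set A} | X \subset Y) delta Y.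

Definition cl (X : {set A}) : {set A} := [set y | rkd (y |: X) == rkd X].

Definition indep (X : {set A}) : Prop := forall x, x \in X -> x \notin cl (X :\ x).
End SetSystems.

Definition PG_iso (A B : finType) (R : {set {set A}}) (R' : {set {set B}}) : Prop :=
  exists f : A -> B, bijective f /\
    forall X : {set A}, f @: cl R X = cl R' (f @: X).

From Pilot Require Import Defs.
From HB Require Import structures.
From mathcomp Require Import all_boot all_order all_algebra.
From mathcomp Require Import zify.
Import Order.TTheory GRing.Theory Num.Theory.

(* For (A;R) in C the function d is the rank function of the
   pregeometry PG(A;R): it is monotone, submodular, grows by at most one per
   added point and is non-negative, so every set X contains an independent
   "basis" I with d(I) = |I| and X in cl(I).  Consequently an isomorphism of
   pregeometries preserves d.  On a closed set (a flat) K the minimum defining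
   d(K) is attained at K itself, hence |R[K]| = |K| - d(K) is also preserved.
   Writing |R[K]| as the sum, over flats J in K, of the number of relations
   r in R with cl(r) = J, a strong induction on |K| shows that these numbers
   are preserved by the isomorphism as well.
   In the theorem, the hypotheses on C force C itself to be a relation of R
   with d(C) = n-1; its image must then be the closure of some relation r'
   of R' with d(r') = n-1, whereas d(r') < |r'| <= m < n for (B;R') in C_m. *)

Set Implicit Arguments.
Unset Strict Implicit.

Section RankCalculus.
Variables (A : finType) (R : {set {set A}}).
Local Notation d := (rkd R).
Local Notation delta := (delta R).
Local Open Scope ring_scope.
Implicit Types (x y : A) (X Y I J K S : {set A}).

Lemma rkd_le X Y : X \subset Y -> d X <= delta Y.
Proof. by move=> sXY; apply: bigmin_le_cond. Qed.

Lemma rkd_attained X : exists2 Y : {set A}, X \subset Y & d X = delta Y.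
Proof.
have [Y sXY Ymin] := @arg_minP _ _ _ setT (fun Y => X \subset Y) delta (subsetT X).
exists Y => //; apply: le_anti; rewrite rkd_le //=.
by apply/bigmin_geP; split => [|Z /Ymin //]; apply: Ymin.
Qed.

Lemma rkd_mono X Y : X \subset Y -> d X <= d Y.
Proof.
by move=> sXY; have [Z sYZ ->] := rkd_attained Y; apply/rkd_le/(subset_trans sXY).
Qed.

Lemma rkd_le_card X : d X <= #|X|%:Z.
Proof. by apply: le_trans (rkd_le (subxx X)) _; rewrite /Defs.delta; lia. Qed.

Lemma selfsuff_rkd X : selfsuff R X -> d X = delta X.
Proof.
move=> ssX; apply: le_anti; rewrite rkd_le //=.
by have [Y sXY ->] := rkd_attained X; apply: ssX.
Qed.

(* A relation r has rank below its size, since r itself lies in R[r]. *)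
Lemma rkd_relation_lt r : r \in R -> d r < #|r|%:Z.
Proof.
move=> rR; have r_rel : (0 < #|Rin R r|)%N.
  by apply/card_gt0P; exists r; rewrite inE rR subxx.
by apply: le_lt_trans (rkd_le (subxx r)) _; rewrite /Defs.delta; lia.
Qed.

Lemma Rin_mono X Y : X \subset Y -> Rin R X \subset Rin R Y.
Proof.
by move=> sXY; apply/subsetP => r; rewrite !inE => /andP[-> /subset_trans ->].
Qed.

(* delta is submodular, because R[X] u R[Y] is contained in R[X u Y] and
   R[X] n R[Y] = R[X n Y]. *)
Lemma delta_submod X Y : delta (X :|: Y) + delta (X :&: Y) <= delta X + delta Y.
Proof.
have cardXY := cardsUI X Y.
have cardR : (#|Rin R X| + #|Rin R Y| <= #|Rin R (X :|: Y)| + #|Rin R (X :&: Y)|)%N.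
  rewrite -cardsUI; apply: leq_add; apply: subset_leq_card.
    by rewrite subUset !Rin_mono ?subsetUl ?subsetUr.
  apply/subsetP => r; rewrite !inE => /andP[/andP[-> rX] /andP[_ rY]].
  by rewrite subsetI rX rY.
rewrite /Defs.delta; lia.
Qed.

Lemma rkd_submod X Y : d (X :|: Y) + d (X :&: Y) <= d X + d Y.
Proof.
have [X' sXX' ->] := rkd_attained X; have [Y' sYY' ->] := rkd_attained Y.
by apply: le_trans (delta_submod X' Y'); apply: lerD; apply: rkd_le;
  [apply: setUSS | apply: setISS].
Qed.

Lemma rkd_add1 x X : d (x |: X) <= d X + 1.
Proof.
have [Y sXY ->] := rkd_attained X.
apply: le_trans (rkd_le (setUS [set x] sXY)) _.
have cardU1 := cardsU1 x Y; have notin_le1 := leq_b1 (x \notin Y).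
have cardR := subset_leq_card (Rin_mono (subsetUr [set x] Y)).
by rewrite /Defs.delta; lia.
Qed.

Lemma mem_cl y X : (y \in cl R X) = (d (y |: X) == d X).
Proof. by rewrite inE. Qed.

Lemma sub_cl X : X \subset cl R X.
Proof.
apply/subsetP => x xX; rewrite mem_cl; apply/eqP; congr d.
by apply/setUidPr; rewrite sub1set.
Qed.

(* Closure is monotone: a consequence of submodularity. *)
Lemma cl_mono I J : I \subset J -> cl R I \subset cl R J.
Proof.
move=> sIJ; apply/subsetP => x; rewrite !mem_cl => /eqP dxI.
have submod := rkd_submod J (x |: I).
have eU : J :|: (x |: I) = x |: J by rewrite setUCA (setUidPl sIJ).
have dI_le : d I <= d (J :&: (x |: I)) by apply: rkd_mono; rewrite subsetI sIJ subsetUr.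
rewrite eU dxI in submod; rewrite eq_le (rkd_mono (subsetUr [set x] J)) andbT; lia.
Qed.

Lemma rkd_span I S : S \subset cl R I -> d (I :|: S) = d I.
Proof.
have [k] := ubnP #|S|; elim: k S => // k IH S /ltnSE cardS sS.
have [-> | [y yS]] := set_0Vmem S; first by rewrite setU0.
have sS' : S :\ y \subset cl R I := subset_trans (subD1set S y) sS.
have cardS' : (#|S :\ y| < k)%N by move: cardS; rewrite (cardsD1 y S) yS.
rewrite -(IH _ cardS' sS') -{1}(setD1K yS) setUCA; apply/eqP; rewrite -mem_cl.
exact: (subsetP (cl_mono (subsetUl _ _))) (subsetP sS y yS).
Qed.

Lemma rkd_cl X : d (cl R X) = d X.
Proof. by rewrite -{1}(setUidPr (sub_cl X)) rkd_span. Qed.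

Lemma cl_idem X : cl R (cl R X) = cl R X.
Proof.
apply/eqP; rewrite eqEsubset sub_cl andbT; apply/subsetP => y.
rewrite !mem_cl rkd_cl => /eqP dy; rewrite eq_le (rkd_mono (subsetUr [set y] X)) andbT -dy.
exact/rkd_mono/setUS/sub_cl.
Qed.

Lemma flat_rkd K : cl R K = K -> d K = delta K.
Proof.
move=> flatK; have [Y sKY dK] := rkd_attained K.
suff eYK : Y = K by rewrite dK eYK.
apply/eqP; rewrite eqEsubset sKY andbT; apply/subsetP => y yY.
rewrite -flatK mem_cl eq_le (rkd_mono (subsetUr [set y] K)) andbT dK.
by apply: rkd_le; rewrite subUset sub1set yY.
Qed.

Definition spanning_rels J : {set {set A}} := [set r in R | cl R r == J].

Lemma spanning_rels_nonflat J : cl R J != J -> spanning_rels J = set0.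
Proof.
move=> nflat; apply/setP => r; rewrite !inE; apply/negbTE.
by apply: contra nflat => /andP[_ /eqP <-]; rewrite cl_idem.
Qed.

(* The relations inside a flat K are partitioned by their closures. *)
Lemma card_Rin_flat K : cl R K = K ->
  #|Rin R K| = (\sum_(J : {set A} | J \subset K) #|spanning_rels J|)%N.
Proof.
move=> flatK; rewrite -sum1_card (partition_big (cl R) (fun J => J \subset K)); last first.
  by move=> r; rewrite inE => /andP[_ /cl_mono]; rewrite flatK.
apply: eq_bigr => J sJK; rewrite sum1dep_card; apply: eq_card => r.
rewrite !inE andbAC; apply: andb_idr => /andP[_ /eqP clr].
by rewrite (subset_trans (sub_cl r)) ?clr.
Qed.

End RankCalculus.

Section Bases.
Variables (A : finType) (R : {set {set A}}).
Hypothesis inC_R : inC R.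
Local Notation d := (rkd R).
Local Open Scope ring_scope.
Implicit Types X I D : {set A}.

Lemma rkd_ge0 X : 0 <= d X.
Proof. by have [Y _ ->] := rkd_attained R X; apply: inC_R.2. Qed.

Lemma exists_basis X : exists I, [/\ I \subset X, d I = #|I|%:Z & X \subset cl R I].
Proof.
pose basic I := (I \subset X) && (d I == #|I|%:Z).
have basic0 : basic set0.
  by rewrite /basic sub0set cards0 eq_le rkd_ge0 andbT -(cards0 A) rkd_le_card.
have [I /andP[sIX /eqP dI] Imax] := @arg_maxnP _ set0 basic (fun I => #|I|) basic0.
exists I; split => //; apply/subsetP => x xX.
have [xI|xnI] := boolP (x \in I); first exact: (subsetP (sub_cl R I)).
rewrite mem_cl eq_le (rkd_mono R (subsetUr [set x] I)) andbT leNgt; apply/negP => grow.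
have cardU1 := cardsU1 x I; rewrite xnI /= in cardU1.
have dU1 : d (x |: I) = #|x |: I|%:Z by have := rkd_add1 R x I; rewrite cardU1; lia.
have := Imax (x |: I); rewrite /basic subUset sub1set xX sIX dU1 eqxx cardU1 => /(_ isT); lia.
Qed.

Lemma indep_rkd D : indep R D -> d D = #|D|%:Z.
Proof.
move=> indD; have [I [sID dI sDcl]] := exists_basis D.
suff -> : D = I by [].
apply/eqP; rewrite eqEsubset sID andbT; apply/subsetP => x xD; apply/negPn/negP => xnI.
have sIDx : I \subset D :\ x by rewrite subsetD1 sID xnI.
exact/(negP (indD x xD))/(subsetP (cl_mono R sIDx))/(subsetP sDcl x xD).
Qed.

Lemma indep_Rin0 D : indep R D -> Rin R D = set0.
Proof.
move=> /indep_rkd dD; apply: cards0_eq.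
by have := rkd_le R (subxx D); rewrite dD /delta; lia.
Qed.

Lemma circuit_relation (C : {set A}) :
  (0 < #|C|)%N -> selfsuff R C -> d C = Posz #|C|.-1 ->
  (forall D, D \subset C -> #|D| = #|C|.-1 -> indep R D) -> C \in R.
Proof.
move=> C_gt0 ssC dC indC.
have /cards1P [r Rin_r] : #|Rin R C| == 1%N.
  by apply/eqP; move: dC; rewrite selfsuff_rkd // /delta; lia.
have : r \in Rin R C by rewrite Rin_r set11.
rewrite inE => /andP[rR srC].
suff <- : r = C by [].
apply/eqP; rewrite eqEsubset srC /=; apply/subsetPn => -[x xC xnr].
have cardD : #|C :\ x| = #|C|.-1 by rewrite (cardsD1 x C) xC.
have := indep_Rin0 (indC _ (subD1set C x) cardD).
by move/setP/(_ r); rewrite !inE rR subsetD1 srC xnr.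
Qed.

End Bases.

Lemma imsetK (T U : finType) (h : T -> U) (h' : U -> T) :
  cancel h h' -> cancel (fun X : {set T} => h @: X) (fun Y => h' @: Y).
Proof. by move=> hK X; rewrite -imset_comp (eq_imset _ hK) imset_id. Qed.

Lemma rkd_image_le (T U : finType) (S : {set {set T}}) (S' : {set {set U}}) (h : T -> U) :
  inC S -> (forall X : {set T}, h @: cl S X = cl S' (h @: X)) ->
  forall X : {set T}, (rkd S' (h @: X) <= rkd S X)%R.
Proof.
move=> inC_S h_cl X; have [I [sIX dI sXcl]] := exists_basis inC_S X.
have hX_span : h @: X \subset cl S' (h @: I) by rewrite -h_cl imsetS.
apply: le_trans (rkd_mono S' (subsetUr (h @: I) (h @: X))) _.
rewrite rkd_span //; apply: le_trans (rkd_le_card S' _) _.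
by apply: le_trans (rkd_mono S sIX); rewrite dI lez_nat leq_imset_card.
Qed.

Section Isomorphism.
Variables (A B : finType) (R : {set {set A}}) (R' : {set {set B}}).
Variables (f : A -> B) (g : B -> A).
Hypotheses (fK : cancel f g) (gK : cancel g f).
Hypothesis f_cl : forall X : {set A}, f @: cl R X = cl R' (f @: X).
Hypotheses (inC_R : inC R) (inC_R' : inC R').
Local Open Scope ring_scope.
Implicit Types (X J K r : {set A}) (Y : {set B}).

Lemma g_cl (Y : {set B}) : g @: cl R' Y = cl R (g @: Y).
Proof. by rewrite -[Y in cl R' Y](imsetK gK) -f_cl imsetK. Qed.

Lemma rkd_image X : rkd R' (f @: X) = rkd R X.
Proof.
apply: le_anti; rewrite rkd_image_le //=.
by rewrite -{1}(imsetK fK X) rkd_image_le // => Y; apply: g_cl.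
Qed.

Lemma flat_image K : (cl R' (f @: K) == f @: K) = (cl R K == K).
Proof. by rewrite -f_cl (inj_eq (can_inj (imsetK fK))). Qed.

(* On flats, the number of relations |R[K]| = |K| - d(K) is preserved. *)
Lemma card_Rin_image K : cl R K = K -> #|Rin R' (f @: K)| = #|Rin R K|.
Proof.
move=> flatK; have flatfK : cl R' (f @: K) = f @: K by apply/eqP; rewrite flat_image flatK.
have := flat_rkd flatK; have := flat_rkd flatfK.
by rewrite rkd_image /delta (card_imset _ (can_inj fK)); lia.
Qed.

Lemma sum_subsets_image (F : {set B} -> nat) K :
  (\sum_(J' : {set B} | J' \subset f @: K) F J' =
   \sum_(J : {set A} | J \subset K) F (f @: J))%N.
Proof.
rewrite (reindex (fun J => f @: J)) /=; last first.
  by exists (fun J' : {set B} => g @: J') => X _; rewrite imsetK.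
apply: eq_bigl => J; apply/idP/idP => [|/imsetS //].
by move/(imsetS g); rewrite !imsetK.
Qed.

Lemma card_spanning_rels_image K : #|spanning_rels R' (f @: K)| = #|spanning_rels R K|.
Proof.
have [k] := ubnP #|K|; elim: k K => // k IH K /ltnSE cardK.
have [flatK | nflatK] := eqVneq (cl R K) K; last first.
  have nflatfK : cl R' (f @: K) != f @: K by rewrite flat_image.
  by rewrite !spanning_rels_nonflat ?cards0.
have flatfK : cl R' (f @: K) = f @: K by apply/eqP; rewrite flat_image flatK.
have := card_Rin_image flatK.
rewrite (card_Rin_flat flatK) (card_Rin_flat flatfK) sum_subsets_image.
rewrite (bigD1 K) //= [X in _ = X -> _](bigD1 K) //=.
rewrite (eq_bigr (fun J => #|spanning_rels R J|)); first by move/addIn.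
move=> J /andP[sJK nJK]; apply: IH; apply: leq_trans cardK.
by apply: proper_card; rewrite properEneq nJK.
Qed.

Lemma relation_image r : r \in R -> exists2 r', r' \in R' & rkd R' r' = rkd R r.
Proof.
move=> rR; have : (0 < #|spanning_rels R' (f @: cl R r)|)%N.
  by rewrite card_spanning_rels_image; apply/card_gt0P; exists r; rewrite inE rR eqxx.
case/card_gt0P => r'; rewrite inE => /andP[r'R' /eqP cl_r'].
by exists r' => //; rewrite -rkd_cl cl_r' rkd_image rkd_cl.
Qed.

End Isomorphism.

Theorem mainTheorem11 (m n : nat) (A : finType) (R : {set {set A}}) :
  m < n ->
  inC R ->
  (exists C : {set A},
      [/\ selfsuff R C, #|C| = n, rkd R C = Posz n.-1 &
          forall D : {set A}, D \subset C -> #|D| = n.-1 -> indep R D]) ->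
  forall (B : finType) (R' : {set {set B}}), inCm R' m -> ~ PG_iso R R'.
Proof.
move=> lt_mn inC_R [C [ssC cardC dC indC]] B R' [inC_R' small_R'] [f [[g fK gK] f_cl]].
have C_rel : C \in R.
  have n_gt0 : 0 < n := leq_ltn_trans (leq0n m) lt_mn.
  by apply: (circuit_relation inC_R _ ssC); rewrite cardC.
have [r' r'R' dr'] := relation_image fK gK f_cl inC_R inC_R' C_rel.
have := rkd_relation_lt r'R'; have := small_R' r' r'R'.
by rewrite dr' dC; lia.
Qed.
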